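(* Let $d\geq 1$, let $p_1<p_2<\dots<p_d$ be the first $d$ prime numbers, let $N\geq 1$ be an integer, and let $C>1$ and $\sigma\in\mathbb{R}$. Let $\mathbf{A}_1$ be the $(d+1)\times(d+1)$ real matrix $$\mathbf{A}_1=\begin{bmatrix}\ln p_1 & & & 0\\ & \ddots & & \vdots\\ & & \ln p_d & 0\\ C\ln p_1 & \cdots & C\ln p_d & C\ln N\end{bmatrix}$$ (diagonal entries $\ln p_1,\dots,\ln p_d$ in the first $d$ rows, zeros elsewhere in those rows, last row $(C\ln p_1,\dots,C\ln p_d,C\ln N)$). Let $\mathbf{z}=(z_1,\dots,z_{d+1})\in\mathbb{Z}^{d+1}$ with $z_{d+1}<0$, and put $\gamma=|z_{d+1}|$, $$u=\prod_{1\le i\le d,\ z_i>0}p_i^{z_i},\qquad k=\prod_{1\le i\le d,\ z_i<0}p_i^{-z_i}.$$ If $$\|\mathbf{A}_1\mathbf{z}\|_1\leq 2\ln C+2\sigma\ln p_d-\gamma\ln N,$$ then $|u-kN^{\gamma}|\leq p_d^{\sigma}$.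
   Context: $\ln$ denotes the natural logarithm and $\|\cdot\|_1$ the $\ell^1$ norm on $\mathbb{R}^{d+1}$. Empty products equal $1$. *)

From HB Require Import structures.
From mathcomp Require Import all_boot all_order all_algebra.
From mathcomp Require Import all_classical all_reals all_analysis.
Set Implicit Arguments. Unset Strict Implicit. Unset Printing Implicit Defensive.
Import Order.TTheory GRing.Theory Num.Theory.
Local Open Scope ring_scope.

(* [is_nth_prime i q] : q is the i-th prime (1-indexed: the 1st prime is 2),
   i.e. q is prime and exactly i-1 primes are smaller than q. *)
Definition is_nth_prime (i q : nat) : bool :=
  prime q && (count prime (iota 0 q) == i.-1)%N.

(* The matrix A_1, indices 0..d (row/column i < d corresponds to p_{i+1};
   index d is the last row/column). p k denotes the k-th prime p_k. *)
Definition A1 (R : realType) (d : nat) (p : nat -> nat) (C : R) (N : nat)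
  : 'M[R]_(d.+1) :=
  \matrix_(i, j)
    (if (i < d)%N then (if i == j then ln (p i.+1)%:R else 0)
     else if (j < d)%N then C * ln (p j.+1)%:R else C * ln N%:R).

Definition l1norm (R : realType) (n : nat) (v : 'cV[R]_n) : R :=
  \sum_(i < n) `|v i 0|.

From HB Require Import structures.
From mathcomp Require Import all_boot all_order all_algebra.
From mathcomp Require Import all_classical all_reals all_analysis.
From mathcomp Require Import ring lra.
Import Order.TTheory GRing.Theory Num.Theory.
Local Open Scope ring_scope.

(* The first d rows of A_1 z contribute ln u + ln k to the l^1 norm and the
   last row contributes C |ln u - ln (k N^gamma)|.  With U = u, V = k N^gamma
   and P = p_d^sigma the hypothesis thus reads
   ln U + ln V + C |ln U - ln V| <= 2 ln C + 2 ln P.  Writing V = y U with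
   0 < y < 1 (wlog), this says U^2 y^(1-C) <= C^2 P^2, and the elementary
   bound C y^((C-1)/2) (1 - y) <= 1 then gives |U - V| = U (1 - y) <= P. *)

Section LogInequalities.
Variable R : realType.

Lemma ln_le_tangent (t x : R) : 0 < t -> 0 < x -> ln x <= ln t + x / t - 1.
Proof.
move=> t_gt0 x_gt0; have xt_gt0 : 0 < x / t by exact: divr_gt0.
have := @le_ln1Dx R (x / t - 1).
rewrite addrCA subrr addr0 ln_div ?posrE //; lra.
Qed.

(* The tangent points are where [y ^ a * (1 - y)] attains its maximum. *)
Lemma ln_pow_mul_1B_le (a y : R) : 0 < a -> 0 < y < 1 ->
  a * ln y + ln (1 - y) <= a * ln a - (a + 1) * ln (a + 1).
Proof.
move=> a_gt0 /andP[y_gt0 y_lt1].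
have a1_gt0 : 0 < a + 1 by lra.
have := @ln_le_tangent (a / (a + 1)) y (divr_gt0 a_gt0 a1_gt0) y_gt0.
rewrite ln_div ?posrE // invf_div => /(ler_wpM2l (ltW a_gt0)).
have -> : a * (ln a - ln (a + 1) + y * ((a + 1) / a) - 1)
          = a * ln a - a * ln (a + 1) + y * (a + 1) - a by field; lra.
have := @ln_le_tangent (1 / (a + 1)) (1 - y) (divr_gt0 ltr01 a1_gt0) ltac:(lra).
rewrite ln_div ?posrE // ln1 invf_div divr1.
lra.
Qed.

Lemma ln_2aD1_le (a : R) : 0 < a -> ln (2 * a + 1) + a * ln a <= (a + 1) * ln (a + 1).
Proof.
move=> a_gt0; have a1_gt0 : 0 < a + 1 by lra.
have := @ln_le_tangent (a + 1) (2 * a + 1) a1_gt0 ltac:(lra).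
have := @ln_le_tangent (a + 1) a a1_gt0 a_gt0 => /(ler_wpM2l (ltW a_gt0)).
have -> : (2 * a + 1) / (a + 1) = 1 + a / (a + 1) by field; lra.
have : a * (a / (a + 1)) = a - a / (a + 1) by field; lra.
lra.
Qed.

Lemma ln_gap_le0 (c y : R) : 1 < c -> 0 < y < 1 ->
  ln c + (c - 1) / 2 * ln y + ln (1 - y) <= 0.
Proof.
move=> c_gt1 y01; have a_gt0 : 0 < (c - 1) / 2 by lra.
have := ln_2aD1_le _ a_gt0; have := ln_pow_mul_1B_le _ _ a_gt0 y01.
have -> : 2 * ((c - 1) / 2) + 1 = c by field.
lra.
Qed.

Lemma dist_le_of_ln_bound (U V P c : R) : 0 < U -> 0 < V -> 0 < P -> 1 < c ->
  ln U + ln V + c * `|ln U - ln V| <= 2 * ln c + 2 * ln P -> `|U - V| <= P.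
Proof.
move=> U_gt0 V_gt0 P_gt0 c_gt1.
wlog le_VU : U V U_gt0 V_gt0 / V <= U.
  move=> H; case: (leP V U) => [|/ltW] le_VU; first exact: H.
  by move=> hyp; rewrite distrC; apply: H => //; rewrite distrC; lra.
move=> hyp; have [<-|neq_VU] := eqVneq V U; first by rewrite subrr normr0 ltW.
set y := V / U.
have y01 : 0 < y < 1.
  by rewrite divr_gt0 //= ltr_pdivrMr // mul1r lt_neqAle neq_VU le_VU.
have eV : V = y * U by rewrite /y divfK // gt_eqF.
have lny_lt0 : ln y < 0 by exact: ln_lt0.
have [y_gt0 y_lt1] := andP y01.
rewrite eV lnM ?posrE // in hyp; rewrite eV.
have abs_ln : `|ln U - (ln y + ln U)| = - ln y.
  by rewrite opprD addrCA subrr addr0 normrN ltr0_norm.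
rewrite abs_ln in hyp.
have -> : `|U - y * U| = U * (1 - y) by rewrite gtr0_norm ?subr_gt0; [ring|nra].
have y1_gt0 : 0 < 1 - y by lra.
rewrite -ler_ln ?posrE ?mulr_gt0 // lnM ?posrE //.
have := ln_gap_le0 _ _ c_gt1 y01.
nra.
Qed.

End LogInequalities.

Section SignedFactorization.
Variable R : realType.

Lemma ln_prod (I : finType) (P : pred I) (F : I -> R) :
  (forall i, P i -> 0 < F i) ->
  ln (\prod_(i | P i) F i) = \sum_(i | P i) ln (F i).
Proof.
move=> F_gt0.
suff [] : 0 < \prod_(i | P i) F i /\ ln (\prod_(i | P i) F i) = \sum_(i | P i) ln (F i)
  by [].
apply: (big_rec2 (fun a b => 0 < a /\ ln a = b)); first by rewrite ln1.
move=> i a b Pi [a_gt0 <-]; have Fi_gt0 := F_gt0 i Pi.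
by rewrite mulr_gt0 // lnM ?posrE.
Qed.

Lemma ln_natr_prod_pow (I : finType) (P : pred I) (q e : I -> nat) :
  (forall i, P i -> 0 < q i)%N ->
  ln ((\prod_(i | P i) q i ^ e i)%N%:R : R) = \sum_(i | P i) ln (q i)%:R * (e i)%:R.
Proof.
move=> q_gt0; rewrite natr_prod ln_prod => [|i Pi]; last first.
  by rewrite natrX exprn_gt0 // ltr0n q_gt0.
by apply: eq_bigr => i Pi; rewrite natrX lnXn ?ltr0n ?q_gt0 // mulr_natr.
Qed.

Variables (I : finType) (P : pred I) (q : I -> nat) (z : I -> int).
Hypothesis q_gt0 : forall i, P i -> (0 < q i)%N.

Local Notation num := (\prod_(i | P i && (0 < z i)%R) q i ^ absz (z i))%N.
Local Notation den := (\prod_(i | P i && (z i < 0)%R) q i ^ absz (z i))%N.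

Lemma prod_pow_gt0 (Q : pred I) : (0 < \prod_(i | P i && Q i) q i ^ absz (z i))%N.
Proof. by apply: prodn_cond_gt0 => i /andP[Pi _]; rewrite expn_gt0 q_gt0. Qed.

Lemma ln_num_add_den :
  ln (num%:R : R) + ln den%:R = \sum_(i | P i) ln (q i)%:R * `|(z i)%:~R|.
Proof.
rewrite !ln_natr_prod_pow => [|i /andP[/q_gt0]//|i /andP[/q_gt0]//].
rewrite !big_mkcondr -big_split; apply: eq_bigr => i _ /=.
rewrite natr_absz intr_norm.
by case: ltrgt0P => [||->]; rewrite ?normr0 ?mulr0 ?addr0 ?add0r.
Qed.

Lemma ln_num_sub_den :
  ln (num%:R : R) - ln den%:R = \sum_(i | P i) ln (q i)%:R * (z i)%:~R.
Proof.
rewrite !ln_natr_prod_pow => [|i /andP[/q_gt0]//|i /andP[/q_gt0]//].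
rewrite !big_mkcondr -sumrB; apply: eq_bigr => i _ /=.
rewrite natr_absz intr_norm.
case: ltrgt0P => [x_gt0|x_lt0|->]; rewrite ?normr0 ?mulr0 ?subr0 ?sub0r //.
- by rewrite gtr0_norm ?ltr0z.
- by rewrite ltr0_norm ?ltrz0 // mulrN opprK.
Qed.

End SignedFactorization.

Section MatrixA1.
Variables (R : realType) (d : nat) (p : nat -> nat) (C : R) (N : nat).
Hypothesis p_gt0 : forall i : 'I_d.+1, (i < d)%N -> (0 < p i.+1)%N.
Hypothesis C_ge0 : 0 <= C.

Lemma sum_ord_lt_max n (F : 'I_n.+1 -> R) :
  \sum_(i < n.+1) F i = \sum_(i < n.+1 | (i < n)%N) F i + F ord_max.
Proof.
rewrite (bigD1 ord_max) //= addrC; congr (_ + _); apply: eq_bigl => i.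
by rewrite ltn_neqAle -ltnS ltn_ord andbT.
Qed.

Lemma A1_mulmx_lt (x : 'I_d.+1 -> R) (i : 'I_d.+1) : (i < d)%N ->
  (A1 d p C N *m \col_j x j) i 0 = ln (p i.+1)%:R * x i.
Proof.
move=> i_lt_d; rewrite mxE (bigD1 i) //= big1 => [|j ji]; rewrite /A1 !mxE i_lt_d.
- by rewrite eqxx addr0.
- by rewrite eq_sym (negbTE ji) mul0r.
Qed.

Lemma A1_mulmx_max (x : 'I_d.+1 -> R) :
  (A1 d p C N *m \col_j x j) ord_max 0
  = C * (\sum_(i < d.+1 | (i < d)%N) ln (p i.+1)%:R * x i + ln N%:R * x ord_max).
Proof.
rewrite mxE sum_ord_lt_max /A1 !mxE ltnn mulrDr mulr_sumr mulrA; congr (_ + _).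
by apply: eq_bigr => i i_lt_d; rewrite !mxE ltnn i_lt_d mulrA.
Qed.

Lemma l1norm_A1_mulmx (x : 'I_d.+1 -> R) :
  l1norm (A1 d p C N *m \col_j x j)
  = \sum_(i < d.+1 | (i < d)%N) ln (p i.+1)%:R * `|x i|
    + C * `|\sum_(i < d.+1 | (i < d)%N) ln (p i.+1)%:R * x i + ln N%:R * x ord_max|.
Proof.
rewrite /l1norm sum_ord_lt_max A1_mulmx_max normrM (ger0_norm C_ge0).
congr (_ + _); apply: eq_bigr => i i_lt_d.
by rewrite A1_mulmx_lt // normrM ger0_norm // ln_ge0 // ler1n p_gt0.
Qed.

End MatrixA1.

Theorem theorem1 (R : realType) (d : nat) (p : nat -> nat) (N : nat)
    (C sigma : R) (z : 'I_d.+1 -> int) :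
  (1 <= d)%N ->
  (forall i : nat, (1 <= i <= d)%N -> is_nth_prime i (p i)) ->
  (1 <= N)%N ->
  1 < C ->
  z ord_max < 0 ->
  let gamma : nat := absz (z ord_max) in
  let u : nat := (\prod_(i < d.+1 | (i < d)%N && (0 < z i)%R) p i.+1 ^ absz (z i))%N in
  let k : nat := (\prod_(i < d.+1 | (i < d)%N && (z i < 0)%R) p i.+1 ^ absz (z i))%N in
  l1norm (A1 d p C N *m \col_i ((z i)%:~R : R))
    <= 2 * ln C + 2 * sigma * ln (p d)%:R - gamma%:R * ln N%:R ->
  `|u%:R - k%:R * N%:R ^+ gamma| <= (p d)%:R `^ sigma.
Proof.
move=> d_ge1 p_prime N_ge1 C_gt1 zd_lt0 gamma u k.
have p_gt0 i : (0 < i <= d)%N -> (0 < p i)%N by move=> /p_prime /andP[/prime_gt0].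
have q_gt0 (i : 'I_d.+1) : (i < d)%N -> (0 < p i.+1)%N by move=> ?; exact: p_gt0.
have pd_gt0 : (0 < p d)%N by apply: p_gt0; rewrite d_ge1 leqnn.
have u_gt0 : (0 < u)%N := @prod_pow_gt0 _ _ _ z q_gt0 _.
have k_gt0 : (0 < k)%N := @prod_pow_gt0 _ _ _ z q_gt0 _.
have ln_u_add_k : ln (u%:R : R) + ln k%:R = _ := @ln_num_add_den R _ _ _ z q_gt0.
have ln_u_sub_k : ln (u%:R : R) - ln k%:R = _ := @ln_num_sub_den R _ _ _ z q_gt0.
have zd : ((z ord_max)%:~R : R) = - gamma%:R.
  by rewrite /gamma natr_absz intr_norm ltr0_norm ?opprK // ltrz0.
rewrite l1norm_A1_mulmx //; last lra.
move=> hyp; apply: (@dist_le_of_ln_bound R _ _ _ C) => //.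
- by rewrite ltr0n.
- by rewrite mulr_gt0 ?exprn_gt0 ?ltr0n.
- by rewrite powR_gt0 ?ltr0n.
rewrite ln_powR lnM ?posrE ?exprn_gt0 ?ltr0n // lnXn ?ltr0n // -[ln N%:R *+ _]mulr_natr.
have -> : ln u%:R - (ln k%:R + ln N%:R * gamma%:R)
          = ln u%:R - ln k%:R + ln N%:R * (z ord_max)%:~R :> R.
  by rewrite zd mulrN opprD addrA.
by rewrite -ln_u_add_k -ln_u_sub_k in hyp; lra.
Qed.
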